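(* Let $R=\bigoplus_{s\in S}R_s$ be an $S$-graded ring inducing $S$ which is graded von Neumann regular. Then: (i) every homogeneous right (resp. left) ideal $I$ of $R$ satisfies $I^2=I$; (ii) every homogeneous two-sided ideal of $R$ is graded semiprime. If moreover $R$ is nearly epsilon-strongly graded, then: (iii) the graded Jacobson radical $J^g(R)$ is zero.
   Context: Rings are associative, not necessarily unital. $S$-graded ring inducing $S$: $S$ a partial groupoid, $R=\bigoplus_{s\in S}R_s$, $R_sR_t\subseteq R_{st}$ when $st$ defined, $R_sR_t\ne0$ implies $st$ defined. Convention: $0\in S$, $R_0=0$, $S\setminus\{0\}=\{s:R_s\ne0\}$, undefined products set to $0$, $0$ absorbing. $H_R=\bigcup_sR_s$. An ideal $J$ is homogeneous if $J=\bigoplus_s(J\cap R_s)$. A homogeneous two-sided ideal $P$ is graded semiprime if for every homogeneous two-sided ideal $I$ and positive integer $n$, $I^n\subseteq P$ implies $I\subseteq P$. $R$ is graded von Neumann regular if $x\in xRx$ for all $x\in H_R$. $S$ cancellative: $0\ne su=tu$ or $0\ne us=ut$ implies $s=t$. (LRI): for every $s$ there exist $s^{-1}$ and idempotents $e,f$ with $es=sf=s$, $fs^{-1}=s^{-1}e=s^{-1}$, $ss^{-1}=e$, $s^{-1}s=f$. $R$ is nearly epsilon-strongly graded if $S$ is cancellative, satisfies (LRI), and for every $s$ and $x\in R_s$ there exist $\epsilon(x)\in R_sR_{s^{-1}}$, $\epsilon'(x)\in R_{s^{-1}}R_s$ (additive subgroups generated by products) with $\epsilon(x)x=x=x\epsilon'(x)$.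 Graded Jacobson radical (for cancellative $S$): a homogeneous right ideal $M$ is graded modular if there is $u\in H_R$ with $ux-x\in M$ for all $x\in H_R$; a graded maximal modular right ideal is a graded modular right ideal that is maximal among proper homogeneous right ideals; $J^g(R)$ is the intersection of all graded maximal modular right ideals (equal to $R$ if there are none). *)

(* Non-unital associative rings are modelled as a
   zmodType R together with an explicit multiplication `mul`. *)
From mathcomp Require Import all_boot all_order all_algebra.
Set Implicit Arguments. Unset Strict Implicit. Unset Printing Implicit Defensive.
Import GRing.Theory.
Local Open Scope ring_scope.

Section Graded.
Variables (R : zmodType) (mul : R -> R -> R).

Definition nu_ring : Prop :=
  [/\ (forall x y z, mul x (mul y z) = mul (mul x y) z),
      (forall x y z, mul (x + y) z = mul x z + mul y z) &
      (forall x y z, mul x (y + z) = mul x y + mul x z)].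

Inductive gen_prod (A B : R -> Prop) : R -> Prop :=
| gen_prod0 : gen_prod A B 0
| gen_prodM a b : A a -> B b -> gen_prod A B (mul a b)
| gen_prodD x y : gen_prod A B x -> gen_prod A B y -> gen_prod A B (x + y)
| gen_prodN x : gen_prod A B x -> gen_prod A B (- x).

Definition add_subgroup (I : R -> Prop) : Prop :=
  [/\ I 0, (forall x y, I x -> I y -> I (x + y)) & (forall x, I x -> I (- x))].

Definition right_ideal (I : R -> Prop) : Prop :=
  add_subgroup I /\ (forall x r, I x -> I (mul x r)).
Definition left_ideal (I : R -> Prop) : Prop :=
  add_subgroup I /\ (forall x r, I x -> I (mul r x)).
Definition twosided_ideal (I : R -> Prop) : Prop :=
  right_ideal I /\ left_ideal I.

Fixpoint idpow (I : R -> Prop) (n : nat) : R -> Prop :=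
  match n with
  | 0 => fun _ => True
  | 1 => I
  | n'.+1 => gen_prod (idpow I n') I
  end.

Variables (S : eqType) (op : S -> S -> S) (z : S) (Rs : S -> R -> Prop).
(* S : partial groupoid, with undefined products set to the absorbing z = 0;
   Rs s = the homogeneous component R_s *)

Definition direct_sum_decomp : Prop :=
  (forall x : R, exists (ss : seq S) (f : S -> R),
      [/\ uniq ss, (forall s, Rs s (f s)) & x = \sum_(s <- ss) f s]) /\
  (forall (ss : seq S) (f : S -> R), uniq ss -> (forall s, Rs s (f s)) ->
      \sum_(s <- ss) f s = 0 -> forall s, s \in ss -> f s = 0).

Definition graded_ring_inducing : Prop :=
  nu_ring /\
  (forall s, op z s = z /\ op s z = z) /\
  (forall s, add_subgroup (Rs s)) /\
  direct_sum_decomp /\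
  (forall s t x y, Rs s x -> Rs t y -> Rs (op s t) (mul x y)) /\
  (forall s t, (exists x y, [/\ Rs s x, Rs t y & mul x y <> 0]) -> op s t <> z) /\
  (forall x, Rs z x -> x = 0) /\
  (forall s, s <> z <-> exists x, Rs s x /\ x <> 0).

Definition homog_elt (x : R) : Prop := exists s, Rs s x.

Definition homogeneous (J : R -> Prop) : Prop :=
  forall x, J x -> exists (ss : seq S) (f : S -> R),
      [/\ uniq ss, (forall s, Rs s (f s) /\ J (f s)) & x = \sum_(s <- ss) f s].

Definition graded_semiprime (P : R -> Prop) : Prop :=
  homogeneous P /\ twosided_ideal P /\
  forall I n, homogeneous I -> twosided_ideal I -> (0 < n)%N ->
    (forall x, idpow I n x -> P x) -> forall x, I x -> P x.

Definition graded_vnr : Prop :=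
  forall x, homog_elt x -> exists r, x = mul (mul x r) x.

Definition cancellative : Prop :=
  forall s t u, (op s u <> z -> op s u = op t u -> s = t) /\
                (op u s <> z -> op u s = op u t -> s = t).

Definition idempotent (e : S) : Prop := op e e = e.

Definition LRI_with (inv : S -> S) : Prop :=
  forall s, exists e f, [/\ idempotent e, idempotent f,
    op e s = s /\ op s f = s, op f (inv s) = inv s /\ op (inv s) e = inv s &
    op s (inv s) = e /\ op (inv s) s = f].

Definition nearly_eps_strongly : Prop :=
  cancellative /\ exists inv : S -> S, LRI_with inv /\
    forall s x, Rs s x ->
      exists ex ex', [/\ gen_prod (Rs s) (Rs (inv s)) ex,
                         gen_prod (Rs (inv s)) (Rs s) ex',
                         mul ex x = x & mul x ex' = x].

Definition graded_modular (M : R -> Prop) : Prop :=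
  homogeneous M /\ right_ideal M /\
  exists u, homog_elt u /\ forall x, homog_elt x -> M (mul u x - x).

Definition proper (M : R -> Prop) : Prop := exists x, ~ M x.

Definition graded_max_modular (M : R -> Prop) : Prop :=
  graded_modular M /\ proper M /\
  forall N, homogeneous N -> right_ideal N -> proper N ->
    (forall x, M x -> N x) -> forall x, N x <-> M x.

Definition graded_jacobson (x : R) : Prop :=
  forall M, graded_max_modular M -> M x.

End Graded.

From mathcomp Require Import all_boot all_order all_algebra.
From mathcomp Require Import boolp classical_sets.
Set Implicit Arguments. Unset Strict Implicit. Unset Printing Implicit Defensive.
Import GRing.Theory.
Local Open Scope ring_scope.

(* Let x be homogeneous of degree s and x = x r x.  If x lies in a homogeneous right
   ideal I then x = (x r) x lies in I I, and inductively in every power of I; this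
   gives (i) and (ii) (for left ideals write x = x (r x)).
   For (iii), replacing r by its component of degree s^-1 keeps x = x r x, since by
   cancellativity s^-1 is the only degree t with (s t) s = s.  Then e = x r is a
   nonzero homogeneous idempotent, and its right annihilator {y | e y = 0} is a proper
   graded modular right ideal with unit e, homogeneous by cancellativity again.  Zorn's
   lemma enlarges it to a graded maximal modular right ideal M; M cannot contain the
   unit e, hence not x.  Every homogeneous component of an element of J^g(R) lies in
   all such M, so it vanishes. *)

Section AdditiveMap.
Variables (R R' : zmodType) (F : R -> R').
Hypothesis FD : {morph F : x y / x + y}.

Lemma additive_map0 : F 0 = 0.
Proof. by apply: (addrI (F 0)); rewrite -FD !addr0. Qed.

Lemma additive_mapN x : F (- x) = - F x.
Proof. by apply/eqP; rewrite -addr_eq0 -FD addNr additive_map0. Qed.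

End AdditiveMap.

Section NonUnitalRing.
Variables (R : zmodType) (mul : R -> R -> R).
Hypothesis Hmul : nu_ring mul.

Lemma mulA x y w : mul x (mul y w) = mul (mul x y) w.
Proof. by case: Hmul. Qed.

Lemma mulDl w : {morph mul^~ w : x y / x + y}.
Proof. by case: Hmul => _ D _ x y; apply: D. Qed.

Lemma mulDr x : {morph mul x : y w / y + w}.
Proof. by case: Hmul => _ _ D y w; apply: D. Qed.

Lemma mul0r x : mul x 0 = 0.
Proof. exact: additive_map0 (mulDr x). Qed.

Lemma mul0l x : mul 0 x = 0.
Proof. exact: additive_map0 (mulDl x). Qed.

Lemma mulBr x y w : mul x (y - w) = mul x y - mul x w.
Proof. by rewrite mulDr (additive_mapN (mulDr x)). Qed.

End NonUnitalRing.

Section Ideals.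
Variables (R : zmodType) (mul : R -> R -> R) (S : eqType) (Rs : S -> R -> Prop).

Lemma gen_prod_sub (A B I : R -> Prop) : add_subgroup I ->
  (forall a b, A a -> B b -> I (mul a b)) -> forall x, gen_prod mul A B x -> I x.
Proof.
case=> I0 ID IN AB x; elim=> [|a b|y w _ Iy _ Iw|y _ Iy]; by [apply: AB|apply: ID|apply: IN|].
Qed.

Lemma homogeneous_ind (I P : R -> Prop) : homogeneous Rs I -> P 0 ->
  (forall x y, P x -> P y -> P (x + y)) -> (forall s x, Rs s x -> I x -> P x) ->
  forall x, I x -> P x.
Proof.
move=> hI P0 PD Ph x /hI[ss [f [_ fP ->]]].
by apply: big_ind => // s _; case: (fP s); apply: Ph.
Qed.

Hypothesis vnr : graded_vnr mul Rs.

Lemma homogeneous_sub_gen_prodr (I A : R -> Prop) : homogeneous Rs I ->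
  (forall x r, I x -> A (mul x r)) -> forall x, I x -> gen_prod mul A I x.
Proof.
move=> hI IA; apply: homogeneous_ind hI (gen_prod0 _ _ _) (@gen_prodD _ _ _ _) _.
move=> s x xs Ix; have [r ->] := vnr (ex_intro _ s xs).
exact: gen_prodM (IA _ _ Ix) Ix.
Qed.

Lemma homogeneous_sub_gen_prodl (I B : R -> Prop) : nu_ring mul -> homogeneous Rs I ->
  (forall x r, I x -> B (mul r x)) -> forall x, I x -> gen_prod mul I B x.
Proof.
move=> Hmul hI IB; apply: homogeneous_ind hI (gen_prod0 _ _ _) (@gen_prodD _ _ _ _) _.
move=> s x xs Ix; have [r ->] := vnr (ex_intro _ s xs).
by rewrite -mulA //; exact: gen_prodM Ix (IB _ _ Ix).
Qed.

Lemma homogeneous_right_ideal_sqr I : homogeneous Rs I -> right_ideal mul I ->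
  forall x, gen_prod mul I I x <-> I x.
Proof.
move=> hI [IG IM] x; split; first by apply: gen_prod_sub => // a b Ia _; apply: IM.
exact: homogeneous_sub_gen_prodr.
Qed.

Lemma homogeneous_left_ideal_sqr I : nu_ring mul -> homogeneous Rs I -> left_ideal mul I ->
  forall x, gen_prod mul I I x <-> I x.
Proof.
move=> Hmul hI [IG IM] x; split; first by apply: gen_prod_sub => // a b _ Ib; apply: IM.
exact: homogeneous_sub_gen_prodl.
Qed.

Lemma homogeneous_right_ideal_sub_idpow I n : homogeneous Rs I -> right_ideal mul I ->
  forall x, I x -> idpow mul I n.+1 x.
Proof.
move=> hI [_ IM]; elim: n => [//|n IH] x Ix.
change (gen_prod mul (idpow mul I n.+1) I x).
by apply: homogeneous_sub_gen_prodr hI _ x Ix => y r Iy; apply/IH/IM.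
Qed.

Lemma homogeneous_twosided_graded_semiprime P : homogeneous Rs P -> twosided_ideal mul P ->
  graded_semiprime mul Rs P.
Proof.
move=> hP tP; do 2 split=> //.
move=> I [//|n] hI [rI _] _ IP x Ix; exact/IP/homogeneous_right_ideal_sub_idpow.
Qed.

End Ideals.

Section GradedComponents.
Variables (R : zmodType) (S : eqType) (z : S) (Rs : S -> R -> Prop).
Hypotheses (Rs_subgroup : forall s, add_subgroup (Rs s)) (Rs_sum : direct_sum_decomp Rs)
  (Rs_z : forall x, Rs z x -> x = 0).

Definition decomposition x (ss : seq S) (f : S -> R) :=
  [/\ uniq ss, forall s, Rs s (f s) & x = \sum_(s <- ss) f s].

Definition restrict (ss : seq S) (f : S -> R) t := if t \in ss then f t else 0.

Lemma Rs0 s : Rs s 0.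
Proof. by case: (Rs_subgroup s). Qed.

Lemma RsD s x y : Rs s x -> Rs s y -> Rs s (x + y).
Proof. by case: (Rs_subgroup s) => _ D _; apply: D. Qed.

Lemma RsB s x y : Rs s x -> Rs s y -> Rs s (x - y).
Proof. by case: (Rs_subgroup s) => _ D N xs /N; apply: D. Qed.

Lemma restrict_homog ss f t : (forall s, Rs s (f s)) -> Rs t (restrict ss f t).
Proof. by rewrite /restrict; case: ifP => // _ _; apply: Rs0. Qed.

Lemma sum_restrict ss f L : uniq ss -> uniq L -> {subset ss <= L} ->
  \sum_(t <- L) restrict ss f t = \sum_(t <- ss) f t.
Proof.
move=> u uL sub; rewrite /restrict -big_mkcond -big_filter /=.
apply/perm_big/uniq_perm => //; first exact: filter_uniq.
by move=> t; rewrite mem_filter andb_idr //; apply: sub.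
Qed.

Lemma restrict_decomposition_unique x ss f ss' f' :
  decomposition x ss f -> decomposition x ss' f' -> restrict ss f =1 restrict ss' f'.
Proof.
case=> u Rf Ex [u' Rf' Ex'] t; pose L := undup (ss ++ ss').
have uL : uniq L := undup_uniq _.
have sub : {subset ss <= L} by move=> v vs; rewrite mem_undup mem_cat vs.
have sub' : {subset ss' <= L} by move=> v vs; rewrite mem_undup mem_cat vs orbT.
have Rg v : Rs v (restrict ss f v - restrict ss' f' v) by apply: RsB; apply: restrict_homog.
have sum0 : \sum_(v <- L) (restrict ss f v - restrict ss' f' v) = 0.
  by rewrite sumrB !sum_restrict // -Ex -Ex' subrr.
have [tL|] := boolP (t \in L).
  by apply/eqP; rewrite -subr_eq0; case: Rs_sum => _ /(_ L _ uL Rg sum0 t tL) ->.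
by rewrite /restrict mem_undup mem_cat negb_or => /andP[/negbTE -> /negbTE ->].
Qed.

Lemma decomposition_exists x : exists d : seq S * (S -> R), decomposition x d.1 d.2.
Proof. by case: Rs_sum => /(_ x)[ss [f dx]] _; exists (ss, f). Qed.

Definition hdec x := sval (cid (decomposition_exists x)).

Definition hcomp t x := restrict (hdec x).1 (hdec x).2 t.

Lemma hdecP x : decomposition x (hdec x).1 (hdec x).2.
Proof. exact: svalP (cid (decomposition_exists x)). Qed.

Lemma hcomp_homog t x : Rs t (hcomp t x).
Proof. by apply: restrict_homog; case: (hdecP x). Qed.

Lemma hcomp_decomposition x ss f : decomposition x ss f -> forall t, hcomp t x = restrict ss f t.
Proof. exact: restrict_decomposition_unique (hdecP x). Qed.

Lemma hcomp_notin t x : t \notin (hdec x).1 -> hcomp t x = 0.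
Proof. by rewrite /hcomp /restrict => /negbTE ->. Qed.

Lemma sum_hcomp x L : uniq L -> {subset (hdec x).1 <= L} -> \sum_(t <- L) hcomp t x = x.
Proof. by case: (hdecP x) => u _ Ex uL sub; rewrite sum_restrict // -Ex. Qed.

Lemma hcomp_homog_elt s x t : Rs s x -> hcomp t x = if t == s then x else 0.
Proof.
move=> xs; rewrite (@hcomp_decomposition x [:: s] (fun t => if t == s then x else 0)).
  by rewrite /restrict inE; case: eqP.
split=> //; last by rewrite big_seq1 eqxx.
by move=> v; case: eqP => [->|_] //; apply: Rs0.
Qed.

Lemma hcompD t : {morph hcomp t : x y / x + y}.
Proof.
move=> x y; pose L := undup ((hdec x).1 ++ (hdec y).1).
have sub : {subset (hdec x).1 <= L} by move=> v vs; rewrite mem_undup mem_cat vs.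
have sub' : {subset (hdec y).1 <= L} by move=> v vs; rewrite mem_undup mem_cat vs orbT.
rewrite (@hcomp_decomposition (x + y) L (fun v => hcomp v x + hcomp v y)).
  rewrite /restrict mem_undup mem_cat; case: ifP => // /norP[tx ty].
  by rewrite !hcomp_notin ?addr0.
split; [exact: undup_uniq | by move=> v; apply: RsD; apply: hcomp_homog |].
by rewrite big_split /= !sum_hcomp ?undup_uniq.
Qed.

Lemma hcomp0 t : hcomp t 0 = 0.
Proof. exact: additive_map0 (hcompD t). Qed.

Lemma hcomp_z x : hcomp z x = 0.
Proof. exact/Rs_z/hcomp_homog. Qed.

Lemma hcomp_eq0 x : (forall t, hcomp t x = 0) -> x = 0.
Proof.
move=> x0; rewrite -(@sum_hcomp x (hdec x).1) //; last by case: (hdecP x).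
by rewrite big1.
Qed.

Lemma hcomp_map (F : R -> R) (D : S -> S) t y :
  {morph F : a b / a + b} -> (forall t' w, Rs t' w -> Rs (D t') (F w)) ->
  (forall t', D t' = D t -> D t <> z -> t' = t) ->
  hcomp (D t) (F y) = F (hcomp t y).
Proof.
move=> FD FR Dinj; have [Dz|Dnz] := eqVneq (D t) z.
  by rewrite Dz hcomp_z; apply/esym/Rs_z; rewrite -Dz; apply/FR/hcomp_homog.
pose L := undup (t :: (hdec y).1).
have uL : uniq L := undup_uniq _.
have tL : t \in L by rewrite mem_undup mem_head.
rewrite -{1}(@sum_hcomp y L) //; last by move=> v vy; rewrite mem_undup inE vy orbT.
rewrite (big_morph F FD (additive_map0 FD)) (big_morph _ (hcompD _) (hcomp0 _)).
rewrite (eq_bigr (fun v => if v == t then F (hcomp t y) else 0)) => [|v _].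
  by rewrite -big_mkcond -big_filter filter_pred1_uniq // big_seq1.
rewrite (hcomp_homog_elt _ (FR _ _ (hcomp_homog v y))).
have [->|ne] := eqVneq v t; first by rewrite eqxx.
by case: eqVneq => // /esym/Dinj/(_ (elimN eqP Dnz)) vt; rewrite vt eqxx in ne.
Qed.

Lemma homogeneousP (I : R -> Prop) : I 0 ->
  homogeneous Rs I <-> forall x t, I x -> I (hcomp t x).
Proof.
move=> I0; split=> [hI x t /hI[ss [f [u fP Ex]]] | Icomp x Ix].
  rewrite (@hcomp_decomposition x ss f) /restrict; last by split=> // s; case: (fP s).
  by case: ifP => // _; case: (fP t).
case: (hdecP x) => u _ _; exists (hdec x).1, (hcomp^~ x); split=> //.
  by move=> s; split; [apply: hcomp_homog | apply: Icomp].
by rewrite sum_hcomp.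
Qed.

End GradedComponents.

Section MaximalModular.
Local Open Scope classical_set_scope.

Lemma Zorn_bigcup_above (T : Type) (P : set (set T)) (A0 : set T) : P A0 ->
    (forall F, F `<=` P -> F !=set0 -> total_on F subset -> P (\bigcup_(X in F) X)) ->
  exists A, [/\ P A, A0 `<=` A & forall B, A `<` B -> ~ P B].
Proof.
(* Zorn_bigcup also needs the empty chain, whose union is set0: shift every set by A0. *)
move=> PA0 Pchain; have [|A [PA Amax]] := Zorn_bigcup (P := fun B => P (B `|` A0)).
  move=> F FP Ftot; have [Fne|F0] := pselect (F !=set0); last first.
    by rewrite setUidr // => x [X FX _]; case: F0; exists X.
  have -> : \bigcup_(X in F) X `|` A0 = \bigcup_(Y in (setU^~ A0) @` F) Y.
    by rewrite bigcup_image bigcupUl.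
  apply: Pchain; first by move=> _ [X FX <-]; apply: FP.
    by case: Fne => X FX; exists (X `|` A0), X.
  move=> _ _ [X FX <-] [Y FY <-].
  by case: (Ftot X Y FX FY) => [XY|YX]; [left|right]; apply: setSU.
exists (A `|` A0); split=> // B [AB BA] PB; apply: (Amax B).
  by split=> [x Ax|BsubA]; [apply: AB; left | apply: BA => x /BsubA; left].
by rewrite setUidl // => x A0x; apply: AB; right.
Qed.

Variables (R : zmodType) (mul : R -> R -> R) (S : eqType) (Rs : S -> R -> Prop).

Lemma homogeneous_bigcup (F : set (set R)) : (forall X, F X -> homogeneous Rs X) ->
  homogeneous Rs (\bigcup_(X in F) X).
Proof.
move=> hF x [X FX /(hF X FX)[ss [f [u fP Ex]]]]; exists ss, f; split=> // s.
by case: (fP s) => fs Xfs; split=> //; exists X.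
Qed.

Lemma right_ideal_bigcup (F : set (set R)) : F !=set0 -> total_on F subset ->
  (forall X, F X -> right_ideal mul X) -> right_ideal mul (\bigcup_(X in F) X).
Proof.
move=> [X0 FX0] Ftot rF; split; first split.
- by exists X0 => //; case: (rF X0 FX0) => [[]].
- move=> x y [X FX Xx] [Y FY Yy]; have [XY|YX] := Ftot X Y FX FY.
    by exists Y => //; case: (rF Y FY) => [[_ D _] _]; apply: D => //; apply: XY.
  by exists X => //; case: (rF X FX) => [[_ D _] _]; apply: D => //; apply: YX.
- by move=> x [X FX Xx]; exists X => //; case: (rF X FX) => [[_ _ N] _]; apply: N.
- by move=> x r [X FX Xx]; exists X => //; case: (rF X FX) => _; apply.
Qed.

Hypothesis Rs_sum : direct_sum_decomp Rs.

Lemma modular_unit_notin (N : R -> Prop) u : right_ideal mul N -> proper N ->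
  (forall x, homog_elt Rs x -> N (mul u x - x)) -> ~ N u.
Proof.
move=> [[N0 ND NN] NM] [y Ny] Nmod Nu; apply: Ny.
have Nhom x : homog_elt Rs x -> N x.
  by move=> hx; rewrite -(subKr (mul u x) x); apply: ND (NM _ _ Nu) (NN _ (Nmod x hx)).
case: Rs_sum => /(_ y)[ss [f [_ fP ->]]] _.
by apply: big_ind => // s _; apply: Nhom; exists s.
Qed.

Lemma graded_modular_sub_max M0 : graded_modular mul Rs M0 -> proper M0 ->
  exists M, graded_max_modular mul Rs M /\ M0 `<=` M.
Proof.
move=> [hM0 [rM0 [u [hu M0u]]]] pM0.
pose P N := [/\ homogeneous Rs N, right_ideal mul N & ~ N u].
have [|F FP Fne Ftot|M [[hM rM Mnu] M0M Mmax]] := Zorn_bigcup_above (P := P) (A0 := M0).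
- by split=> //; apply: modular_unit_notin.
- split; [apply: homogeneous_bigcup | apply: right_ideal_bigcup |] => //.
  + by move=> X /FP[].
  + by move=> X /FP[].
  + by case=> X /FP[_ _]; apply.
exists M; split=> //; split; [split=> //; split=> //| split; first by exists u].
  by exists u; split=> // x hx; apply/M0M/M0u.
move=> N hN rN pN MN x; split=> [Nx|]; last exact: MN.
apply: contrapT => nMx; apply: (Mmax N); first by split=> // NM; apply/nMx/NM.
by split=> //; apply: (modular_unit_notin rN pN) => y hy; apply/MN/M0M/M0u.
Qed.

End MaximalModular.

Section GradedJacobson.
Variables (R : zmodType) (mul : R -> R -> R) (S : eqType) (op : S -> S -> S) (z : S)
  (Rs : S -> R -> Prop) (inv : S -> S).
Hypotheses (HG : graded_ring_inducing mul op z Rs) (vnr : graded_vnr mul Rs)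
  (canc : cancellative op z) (lri : LRI_with op inv).

Let Hmul : nu_ring mul.
Proof. by case: HG. Qed.

Let op_z s : op z s = z.
Proof. by case: HG => _ [/(_ s)[]]. Qed.

Let Rs_subgroup s : add_subgroup (Rs s).
Proof. by case: HG => _ [_ []]. Qed.

Let Rs_sum : direct_sum_decomp Rs.
Proof. by case: HG => _ [_ [_ []]]. Qed.

Let RsM s t x y : Rs s x -> Rs t y -> Rs (op s t) (mul x y).
Proof. by case: HG => _ [_ [_ [_ [M _]]]]; apply: M. Qed.

Let Rs_z x : Rs z x -> x = 0.
Proof. by case: HG => _ [_ [_ [_ [_ [_ [Z _]]]]]]; apply: Z. Qed.

Lemma graded_vnr_homog_witness s w : Rs s w ->
  exists2 r, Rs (inv s) r & w = mul (mul w r) w.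
Proof.
move=> ws; have [r wr] := vnr (ex_intro _ s ws).
have [e [f [_ _ [es _] _ [se _]]]] := lri s.
have Ds : op (op s (inv s)) s = s by rewrite se es.
exists (hcomp Rs_sum (inv s) r); first exact: hcomp_homog.
rewrite -(hcomp_map Rs_subgroup Rs_sum Rs_z (F := fun x => mul (mul w x) w)
                    (D := fun t => op (op s t) s)) /= ?Ds -?wr ?(hcomp_homog_elt _ _ _ ws) ?eqxx //.
- by move=> a b; rewrite mulDr // mulDl.
- by move=> t x xt; apply/RsM/ws/RsM.
move=> t Dt sz; have ez : e <> z by move=> ez; apply: sz; rewrite -es ez op_z.
have st : op s t = e by apply: (canc (op s t) e s).1; rewrite ?Dt ?es.
by apply: (canc t (inv s) s).2; rewrite st // se.
Qed.

Definition rann (e y : R) : Prop := mul e y = 0.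

Lemma rann_right_ideal e : right_ideal mul (rann e).
Proof.
rewrite /rann; split; first split.
- exact: mul0r.
- by move=> x y ex ey; rewrite mulDr // ex ey addr0.
- by move=> x ex; rewrite (additive_mapN (mulDr Hmul e)) ex oppr0.
- by move=> x r ex; rewrite mulA // ex mul0l.
Qed.

Lemma rann_homogeneous t e : Rs t e -> homogeneous Rs (rann e).
Proof.
move=> et; apply/(homogeneousP Rs_subgroup Rs_sum (mul0r Hmul e)) => y v ey.
rewrite /rann -(hcomp_map Rs_subgroup Rs_sum Rs_z (F := mul e) (D := op t)) ?ey ?hcomp0 //.
- exact: mulDr.
- by move=> t' w wt'; apply: RsM.
- by move=> t' tt' tz; apply: (canc t' v t).2; rewrite tt'.
Qed.

Lemma rann_modular e x : mul e e = e -> rann e (mul e x - x).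
Proof. by move=> ee; rewrite /rann mulBr // mulA // ee subrr. Qed.

Lemma exists_graded_max_modular_notin s w : Rs s w -> w <> 0 ->
  exists2 M, graded_max_modular mul Rs M & ~ M w.
Proof.
move=> ws w0; have [r rs wr] := graded_vnr_homog_witness ws.
have [e [f [_ _ _ _ [se _]]]] := lri s.
pose E := mul w r.
have Ee : Rs e E by rewrite -se; apply: RsM.
have EE : mul E E = E by rewrite /E mulA // -wr.
have E0 : E <> 0 by move=> E0; apply: w0; rewrite wr -/E E0 mul0l.
have rann_gmod : graded_modular mul Rs (rann E).
  split; first exact: rann_homogeneous Ee.
  split; first exact: rann_right_ideal.
  by exists E; split=> [|x _]; [exists e | apply: rann_modular].
have rann_proper : proper (rann E) by exists E; rewrite /rann EE.
have [M [maxM sub]] := graded_modular_sub_max Rs_sum rann_gmod rann_proper.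
exists M => // Mw; have [[_ [rM _]] [pM _]] := maxM.
apply: (modular_unit_notin Rs_sum rM pM (u := E)) => [x _|]; first exact/sub/rann_modular.
by case: rM => _; apply.
Qed.

Lemma graded_jacobson_eq0 x : graded_jacobson mul Rs x -> x = 0.
Proof.
move=> Jx; apply: (@hcomp_eq0 _ _ _ Rs_sum) => t; apply: contrapT => xt0.
have [M maxM] := exists_graded_max_modular_notin (hcomp_homog Rs_subgroup Rs_sum t x) xt0.
apply; have [[hM [[[M0 _ _] _] _]] _] := maxM.
exact: (homogeneousP Rs_subgroup Rs_sum M0).1 hM x t (Jx M maxM).
Qed.

End GradedJacobson.

Theorem proposition4p9 (R : zmodType) (mul : R -> R -> R)
  (S : eqType) (op : S -> S -> S) (z : S) (Rs : S -> R -> Prop) :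
  graded_ring_inducing mul op z Rs ->
  graded_vnr mul Rs ->
  [/\ (forall I, homogeneous Rs I -> right_ideal mul I ->
         forall x, gen_prod mul I I x <-> I x),
      (forall I, homogeneous Rs I -> left_ideal mul I ->
         forall x, gen_prod mul I I x <-> I x),
      (forall P, homogeneous Rs P -> twosided_ideal mul P ->
         graded_semiprime mul Rs P) &
      (nearly_eps_strongly mul op z Rs ->
         forall x, graded_jacobson mul Rs x -> x = 0)].
Proof.
move=> HG vnr; have Hmul : nu_ring mul by case: HG.
split.
- exact: homogeneous_right_ideal_sqr.
- by move=> I; apply: homogeneous_left_ideal_sqr.
- exact: homogeneous_twosided_graded_semiprime.
- by case=> canc [inv [lri _]]; apply: (graded_jacobson_eq0 HG vnr canc lri).
Qed.
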